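(* Let $G$ be a finite simple complete bipartite graph $K_{m,n}$ with $m,n\ge 1$. If $G$ has a set graceful labeling (with respect to some finite set $X$), then $G$ is a star, i.e., $m=1$ or $n=1$.
   Context: All graphs are finite and simple. Let $G$ be a graph with vertex set $V$ and edge set $E$, let $X$ be a set and $\mathcal{P}(X)$ its power set. For a function $f:V\to\mathcal{P}(X)$ define $\hat f:E\to\mathcal{P}(X)$ by $\hat f(xy)=f(x)\,\Delta\, f(y)$, where $A\Delta B$ denotes the symmetric difference of sets $A$ and $B$. The function $f$ is a set graceful labeling of $G$ if both $f$ and $\hat f$ are injective and the range of $\hat f$ is exactly $\mathcal{P}(X)\setminus\{\emptyset\}$. *)

From mathcomp Require Import all_boot.
Set Implicit Arguments. Unset Strict Implicit. Unset Printing Implicit Defensive.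

Definition simple_graph (V : finType) (adj : rel V) : Prop :=
  symmetric adj /\ irreflexive adj.

Definition symdiff (X : finType) (A B : {set X}) : {set X} := (A :\: B) :|: (B :\: A).

(* The induced edge labeling fhat(xy) = f x Δ f y (well defined since symdiff
   is symmetric): we express it on endpoints. *)
Definition set_graceful (V X : finType) (adj : rel V) (f : V -> {set X}) : Prop :=
  injective f /\
  (forall x y u v, adj x y -> adj u v ->
      symdiff (f x) (f y) = symdiff (f u) (f v) -> [set x; y] = [set u; v]) /\
  (* range of fhat is exactly P(X) \ {empty} *)
  (forall x y, adj x y -> symdiff (f x) (f y) != set0) /\
  (forall S : {set X}, S != set0 -> exists x y, adj x y /\ symdiff (f x) (f y) = S).

Definition Kmn_adj (m n : nat) : rel ('I_m + 'I_n) :=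
  fun a b => match a, b with
             | inl _, inr _ | inr _, inl _ => true
             | _, _ => false
             end.

From mathcomp Require Import all_boot all_algebra.
From mathcomp Require Import zify.
Import GRing.Theory Num.Theory.
Set Implicit Arguments. Unset Strict Implicit. Unset Printing Implicit Defensive.

(* Fourier analysis on the group ({set X}, symdiff), whose characters are
   chi S : T |-> (-1)^|S :&: T|.  Let a_i (i < m) and b_j (j < n) be the labels
   of the two sides of K_{m,n} and A T, B T the sums of chi (a_i) T and chi (b_j) T.
   Since chi is multiplicative and the edge labels a_i symdiff b_j run exactly once
   over the nonempty sets, A T * B T is the sum of chi S T over nonempty S: this
   is m n = 2^|X| - 1 at T = set0 and -1 otherwise, so A T = +-1 for T nonempty.
   Parseval for the distinct labels a_i gives m 2^|X| = sum_T (A T)^2 = m^2 + m n,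
   i.e. (m - 1)(n - 1) = 0. *)

Section SymmetricDifference.
Variable X : finType.
Implicit Types A B T : {set X}.

Lemma symdiffC A B : symdiff A B = symdiff B A.
Proof. by rewrite /symdiff setUC. Qed.

Lemma symdiffvv A : symdiff A A = set0.
Proof. by apply/setP => x; rewrite /symdiff !inE; case: (x \in A). Qed.

Lemma symdiffK A : involutive (fun T => symdiff T A).
Proof.
by move=> T; apply/setP => x; rewrite /symdiff !inE; case: (x \in A); case: (x \in T).
Qed.

Lemma symdiff_eq0 A B : (symdiff A B == set0) = (A == B).
Proof.
apply/eqP/eqP => [/setP AB | ->]; last exact: symdiffvv.
by apply/setP => x; move: (AB x); rewrite /symdiff !inE; case: (x \in A); case: (x \in B).
Qed.

Lemma odd_card_symdiffI A B T :
  odd #|symdiff A B :&: T| = odd #|A :&: T| (+) odd #|B :&: T|.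
Proof.
have -> : symdiff A B :&: T = ((A :&: T) :\: B) :|: ((B :&: T) :\: A).
  by apply/setP => x; rewrite /symdiff !inE; case: (x \in A); case: (x \in B); case: (x \in T).
rewrite cardsU (_ : (A :&: T :\: B) :&: (B :&: T :\: A) = set0) ?cards0 ?subn0; last first.
  by apply/setP => x; rewrite !inE; case: (x \in A); case: (x \in B); case: (x \in T).
rewrite -(cardsID B (A :&: T)) -(cardsID A (B :&: T)) !oddD.
have -> : A :&: T :&: B = B :&: T :&: A by rewrite setIAC -setIA setIC.
by case: (odd _); case: (odd _); case: (odd _).
Qed.

End SymmetricDifference.

Section Characters.
Variable X : finType.
Local Open Scope ring_scope.
Implicit Types A B S T : {set X}.

Definition chi S T : int := (-1) ^+ odd #|S :&: T|.

Lemma chiC S T : chi S T = chi T S.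
Proof. by rewrite /chi setIC. Qed.

Lemma chi0 T : chi set0 T = 1.
Proof. by rewrite /chi set0I cards0. Qed.

Lemma chi_symdiff A B T : chi (symdiff A B) T = chi A T * chi B T.
Proof. by rewrite /chi odd_card_symdiffI signr_addb. Qed.

(* Translating T by a point x of S flips the sign of every term. *)
Lemma sum_chi_eq0 S : S != set0 -> \sum_T chi S T = 0.
Proof.
case/set0Pn => x Sx; set s := \sum_T chi S T.
have s_opp : s = - s.
  rewrite {1}/s (reindex_inj (inv_inj (symdiffK [set x]))) -sumrN.
  apply: eq_bigr => T _; rewrite chiC chi_symdiff [chi [set x] S]/chi.
  rewrite (_ : [set x] :&: S = [set x]) ?cards1 ?mulrN1 1?chiC //.
  by apply/setP => y; rewrite !inE; case: eqP => // ->.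
have : s *+ 2 == 0 by rewrite mulr2n {1}s_opp addNr.
by rewrite mulrn_eq0 => /eqP.
Qed.

Lemma sum_chi_nonempty T : T != set0 -> \sum_(S | S != set0) chi S T = -1.
Proof.
move=> T0; have := sum_chi_eq0 T0; rewrite (bigD1 set0) //= chiC chi0.
under eq_bigr do rewrite chiC.
by move/eqP; rewrite addrC addr_eq0 => /eqP.
Qed.

Lemma sum_nonempty_chi0 : \sum_(S | S != set0) chi S set0 = (#|{set X}|.-1)%:R.
Proof.
rewrite (eq_bigr (fun=> 1)) => [|S _]; last by rewrite chiC chi0.
by rewrite sumr_const cardC1.
Qed.

Definition char_sum (I : finType) (a : I -> {set X}) T := \sum_i chi (a i) T.

Section CharacterSums.
Variables (I J : finType) (a : I -> {set X}) (b : J -> {set X}).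

Lemma char_sum0 : char_sum a set0 = #|I|%:R.
Proof.
rewrite /char_sum (eq_bigr (fun=> 1)) ?sumr_const // => i _.
by rewrite chiC chi0.
Qed.

Lemma sum_char_sum_sqr : injective a ->
  \sum_T char_sum a T ^+ 2 = (#|I| * #|{set X}|)%:R.
Proof.
move=> a_inj.
transitivity (\sum_i \sum_i' \sum_T chi (symdiff (a i) (a i')) T).
  symmetry; under eq_bigr do rewrite exchange_big.
  rewrite exchange_big; apply: eq_bigr => T _; rewrite expr2 mulr_suml.
  apply: eq_bigr => i _; rewrite mulr_sumr.
  by apply: eq_bigr => i' _; rewrite chi_symdiff.
transitivity (\sum_(i : I) (#|{set X}|%:R : int)); last first.
  by rewrite sumr_const natrM mulr_natl.
apply: eq_bigr => i _.
rewrite (bigD1 i) //= [X in _ + X]big1 => [|i' i'i]; last first.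
  by apply: sum_chi_eq0; rewrite symdiff_eq0 (inj_eq a_inj) eq_sym.
rewrite addr0 symdiffvv (eq_bigr (fun=> 1)) => [|T _]; last exact: chi0.
by rewrite sumr_const.
Qed.

Definition edge_label (p : I * J) := symdiff (a p.1) (b p.2).

Lemma char_sumM T : injective edge_label ->
  edge_label @: setT = [set S | S != set0] ->
  char_sum a T * char_sum b T = \sum_(S | S != set0) chi S T.
Proof.
move=> lab_inj lab_im.
rewrite /char_sum mulr_suml (eq_bigr (fun i => \sum_j chi (edge_label (i, j)) T));
  last by move=> i _; rewrite mulr_sumr; apply: eq_bigr => j _; rewrite chi_symdiff.
rewrite pair_bigA; transitivity (\sum_(p in [set: I * J]) chi (edge_label p) T).
  by apply: eq_bigl => p; rewrite in_setT.
rewrite -(big_imset (chi^~ T) (in2W lab_inj)) lab_im.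
by apply: eq_bigl => S; rewrite inE.
Qed.

End CharacterSums.
End Characters.

Section GracefulCompleteBipartite.
Variables (m n : nat) (X : finType) (f : 'I_m + 'I_n -> {set X}).
Hypothesis f_graceful : set_graceful (@Kmn_adj m n) f.

Let a i := f (inl i).
Let b j := f (inr j).

Lemma Kmn_left_labels_inj : injective a.
Proof. by case: f_graceful => f_inj _ i i' /f_inj [->]. Qed.

Lemma Kmn_edge_label_inj : injective (edge_label a b).
Proof.
case: f_graceful => _ [lab_inj _] [i j] [i' j'].
move/(lab_inj (inl i) (inr j) (inl i') (inr j') isT isT).
move/setP => E; move: (E (inl i)) (E (inr j)); rewrite !inE !eqxx /= ?orbT.
by move=> /esym/orP [/eqP [->] | /eqP //] /esym/eqP [->].
Qed.

Lemma Kmn_edge_label_image : edge_label a b @: setT = [set S | S != set0].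
Proof.
case: f_graceful => _ [_ [lab_neq0 lab_onto]].
apply/setP => S; rewrite inE; apply/imsetP/idP => [[[i j]] _ -> | /lab_onto].
  exact: lab_neq0.
case=> [[x|x] [[y|y] [//= _ <-]]]; first by exists (x, y).
by exists (y, x); rewrite // /edge_label symdiffC.
Qed.

End GracefulCompleteBipartite.

Lemma sqr_eqN1_mul (x y : int) : (x * y = -1 -> x ^+ 2 = 1)%R.
Proof.
move=> xy; have /intUnitRing.unitzPl : (- y * x = 1)%R by rewrite mulNr mulrC xy opprK.
by rewrite qualifE => /orP[] /eqP ->.
Qed.

Theorem mainTheorem1 (m n : nat) (X : finType) :
  1 <= m -> 1 <= n ->
  (exists f : 'I_m + 'I_n -> {set X}, @set_graceful _ X (@Kmn_adj m n) f) ->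
  m = 1 \/ n = 1.
Proof.
move=> m_gt0 n_gt0 [f f_graceful].
pose a i := f (inl i); pose b j := f (inr j).
have AB T := char_sumM T (Kmn_edge_label_inj f_graceful) (Kmn_edge_label_image f_graceful).
have mn : m * n = #|{set X}|.-1.
  by apply/eqP; rewrite -(eqr_nat int) natrM -[m]card_ord -[n]card_ord
    -(char_sum0 a) -(char_sum0 b) AB sum_nonempty_chi0.
have A_sqr T : T != set0 -> (char_sum a T ^+ 2 = 1)%R.
  by move=> T0; apply: (@sqr_eqN1_mul _ (char_sum b T)); rewrite AB sum_chi_nonempty.
have := sum_char_sum_sqr (Kmn_left_labels_inj f_graceful).
rewrite (bigD1 set0) //= char_sum0 (eq_bigr _ A_sqr) sumr_const cardC1 card_ord.
rewrite -natrX -natrD -mn => /eqP; rewrite eqr_nat => /eqP E.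
have N_pos : 0 < #|{set X}| by apply/card_gt0P; exists set0.
have {}E : m * m + m * n = m * (m * n + 1) by rewrite E mn addn1 prednK.
have : (m - 1) * (n - 1) == 0 by apply/eqP; nia.
by rewrite muln_eq0 !subn_eq0; lia.
Qed.
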